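(* Let $i,j,k$ be distinct jobs such that $(i,k)$ and $(j,k)$ are red pairs. Then $D^*(i,j)\ge t_k$ and, in the schedule produced by $1$-SORT, $D(i,j)\le\left(1+\frac{1}{\mu\nu}\right)D^*(i,j)$.
   Context: Setting: single machine, jobs $J=\{1,\dots,n\}$, each job $j$ with test time $t_j\ge0$ and processing time $p_j\ge0$ (revealed only when the test is executed); each job's test must be executed before its processing part, which may start any time after the test; operations are non-preemptive and the machine does one at a time. $\sigma_j=t_j+p_j$, $m_j=\max\{t_j,p_j\}$. Standing assumption (general position): no two of the $3n$ numbers $t_j,p_j,\sigma_j$ are equal. Algorithm $1$-SORT: keep a priority queue of available operations, initially the test of every job $j$ with priority $t_j$; repeatedly remove a minimum-priority operation and execute it immediately; after executing the test of $j$, insert the processing part of $j$ with priority $p_j$. For distinct jobs $j,k$, let $d_{k,j}$ be the total amount of time during which operations of $k$ are executed before the completion time of $j$, and $D(j,k)=d_{j,k}+d_{k,j}$, evaluated for the $1$-SORT schedule; $D^*(j,k)=\min\{\sigma_j,\sigma_k\}$. Fix constants $\mu>1$ and $0<\nu<1$ with $\mu\nu>1$ and $1+\frac1\mu\le\nu+\nu^2$. A job $j$ is imbalanced if $m_j\ge\mu\min\{t_j,p_j\}$. For distinct jobs $j,k$, the ordered pair $(j,k)$ is a red pair if $j$ is imbalanced, $m_j\ge t_k\ge\nu m_j$, and $p_k\ge\nu t_k$. *)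

From mathcomp Require Import all_boot all_order all_algebra.
Set Implicit Arguments. Unset Strict Implicit. Unset Printing Implicit Defensive.
Import Order.TTheory GRing.Theory Num.Theory.
Local Open Scope ring_scope.

Section Sched.
Variables (R : realFieldType) (n : nat) (t p : 'I_n -> R).

(* operation: (j, true) = test of j, (j, false) = processing part of j *)
Definition op := ('I_n * bool)%type.

Definition dur (o : op) : R := if o.2 then t o.1 else p o.1.
Definition prio (o : op) : R := dur o.

Definition pick_min (q0 : op) (Q : seq op) : op :=
  foldl (fun a b => if prio b < prio a then b else a) q0 Q.

(* literal simulation of 1-SORT: remove a min-priority operation, execute it,
   and if it is a test of j, insert the processing part of j *)
Fixpoint run (fuel : nat) (Q : seq op) : seq op :=
  match fuel with
  | 0%N => [::]
  | f.+1 =>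
    match Q with
    | [::] => [::]
    | q0 :: _ =>
      let o := pick_min q0 Q in
      let Q' := rem o Q in
      let Q'' := if o.2 then rcons Q' (o.1, false) else Q' in
      o :: run f Q''
    end
  end.

(* the sequence of operations executed by 1-SORT (2n steps suffice) *)
Definition sort1 : seq op := run (2 * n) [seq (j, true) | j <- enum 'I_n].

Definition start (i : nat) : R := \sum_(o <- take i sort1) dur o.

(* completion time of job j = completion of its processing part *)
Definition compl (j : 'I_n) : R := start (index (j, false) sort1).+1.

(* d_{k,j}: total time during which operations of k are executed before C_j *)
Definition dd (k j : 'I_n) : R :=
  \sum_(i < size sort1 | (nth (k, true) sort1 i).1 == k)
     Num.max 0 (Num.min (start i.+1) (compl j) - start i).

Definition DD (j k : 'I_n) : R := dd j k + dd k j.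

Definition sigma (j : 'I_n) : R := t j + p j.
Definition mm (j : 'I_n) : R := Num.max (t j) (p j).
Definition Dstar (j k : 'I_n) : R := Num.min (sigma j) (sigma k).

(* the 3n numbers t_j, p_j, sigma_j are pairwise distinct *)
Definition numval (a : 'I_3) (j : 'I_n) : R :=
  match val a with 0%N => t j | 1%N => p j | _ => sigma j end.
Definition general_position : Prop :=
  forall (a b : 'I_3) (j k : 'I_n), (a, j) != (b, k) -> numval a j != numval b k.

Definition imbalanced (mu : R) (j : 'I_n) : Prop :=
  mu * Num.min (t j) (p j) <= mm j.

Definition red_pair (mu nu : R) (j k : 'I_n) : Prop :=
  [/\ j != k, imbalanced mu j, nu * mm j <= t k, t k <= mm j & nu * t k <= p k].

End Sched.

From mathcomp Require Import all_boot all_order all_algebra.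
From mathcomp Require Import lra.
Set Implicit Arguments. Unset Strict Implicit. Unset Printing Implicit Defensive.
Import Order.TTheory GRing.Theory Num.Theory.
Local Open Scope ring_scope.

(* The first claim holds because t_k <= m_i <= sigma_i and likewise for j.  For the
   second, let f be the job of {i, j} whose processing part 1-SORT executes first and
   s the other one.  All of f runs before C_f, and of s at most its test, so
   D(f,s) = sigma_f, or sigma_f + t_s when s is tested before f is processed.  Since
   1-SORT always runs a shortest available operation, in the first case m_f <= t_s and
   in the second max(m_f, t_s) <= p_s.  With the imbalance of f and s and
   nu m_s <= t_k <= m_f (from the red pairs), either case gives
   mu nu (D(f,s) - D*(f,s)) <= D*(f,s), which is the claimed bound. *)

Section Simulation.
Variables (R : realFieldType) (n : nat) (t p : 'I_n -> R).

Local Notation op := (op n).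
Local Notation prio := (prio t p).
Local Notation run := (run t p).

Lemma pick_minP (q0 : op) (Q : seq op) :
  pick_min t p q0 Q \in q0 :: Q /\
  forall x, x \in q0 :: Q -> prio (pick_min t p q0 Q) <= prio x.
Proof.
elim: Q q0 => [|b Q IH] q0.
  by split=> [|x]; rewrite ?mem_seq1 // => /eqP ->.
rewrite [pick_min _ _ _ _]/=; set a := if _ then b else q0.
have [a_in a_min] := IH a.
have a_le : prio a <= prio q0 /\ prio a <= prio b.
  by rewrite /a; case: ltP => [/ltW|]; split.
have a_mem : a \in [:: q0, b & Q] by rewrite /a; case: ifP; rewrite !inE eqxx ?orbT.
split.
  by move: a_in; rewrite inE => /predU1P [->|]; rewrite // !inE => ->; rewrite !orbT.
move=> x; rewrite !inE => /or3P [/eqP->|/eqP->|xQ].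
- exact: le_trans (a_min a (mem_head _ _)) a_le.1.
- exact: le_trans (a_min a (mem_head _ _)) a_le.2.
- by apply: a_min; rewrite inE xQ orbT.
Qed.

Definition next_queue (Q : seq op) (o : op) : seq op :=
  if o.2 then rcons (rem o Q) (o.1, false) else rem o Q.

Lemma run_cons f q0 Q :
  let o := pick_min t p q0 (q0 :: Q) in
  run f.+1 (q0 :: Q) = o :: run f (next_queue (q0 :: Q) o).
Proof. by []. Qed.

Definition wf_queue (Q : seq op) : bool :=
  uniq Q && all (fun o : op => o.2 || ((o.1, true) \notin Q)) Q.

Definition pending (Q : seq op) (o : op) : bool :=
  (o \in Q) || ~~ o.2 && ((o.1, true) \in Q).

(* The number of steps [run] still takes from queue [Q]: a test costs two. *)
Definition workload (Q : seq op) : nat := size Q + count (fun o : op => o.2) Q.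

Lemma mem_next_queue (Q : seq op) (o x : op) : uniq Q ->
  (x \in next_queue Q o) = (x != o) && (x \in Q) || o.2 && (x == (o.1, false)).
Proof.
move=> uQ; rewrite /next_queue; case: o.2; last by rewrite mem_rem_uniq // orbF.
by rewrite mem_rcons inE mem_rem_uniq // orbC.
Qed.

Lemma wf_next_queue (Q : seq op) (o : op) : wf_queue Q -> o \in Q ->
  wf_queue (next_queue Q o).
Proof.
case/andP=> uQ /allP wfQ oQ.
have notP : o.2 -> (o.1, false) \notin Q.
  by move=> o2; apply/negP => /wfQ /=; rewrite -o2 -surjective_pairing oQ.
apply/andP; split.
  rewrite /next_queue; case: ifP => o2; last exact: rem_uniq.
  by rewrite rcons_uniq rem_uniq // mem_rem_uniq // negb_and (negbTE (notP o2)) orbT.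
apply/allP => -[y b]; rewrite mem_next_queue //.
case/orP=> [/andP [yo yQ]|/andP [o2 /eqP [-> ->]]] /=.
  case/orP: (wfQ _ yQ) => /= [-> //|ynQ]; apply/orP; right.
  by rewrite mem_next_queue // (negbTE ynQ) andbF /= xpair_eqE andbF andbF.
have -> : (o.1, true) = o by rewrite [RHS]surjective_pairing o2.
rewrite mem_next_queue // eqxx /=.
by apply/negP => /andP [_ /eqP e]; move: o2; rewrite e.
Qed.

Lemma pending_next_queue (Q : seq op) (o x : op) : wf_queue Q -> o \in Q ->
  pending (next_queue Q o) x = (x != o) && pending Q x.
Proof.
move=> /[dup] /andP [uQ /allP wfQ] _ oQ; rewrite /pending !mem_next_queue //.
case: x => y b; case: o oQ => z c oQ /=; rewrite !xpair_eqE.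
case: b; case: c oQ => oQ /=; rewrite ?andbT ?andbF ?orbF //=.
  by case: (eqVneq y z) => [->|_]; rewrite /= ?orbF ?oQ ?orbT.
by case: (eqVneq y z) => [->|_]; rewrite /= ?orbF //; have /= /negbTE -> := wfQ _ oQ.
Qed.

Lemma workload_next_queue (Q : seq op) (o : op) : o \in Q ->
  workload Q = (workload (next_queue Q o)).+1.
Proof.
move=> oQ; rewrite /workload /next_queue (perm_size (perm_to_rem oQ)).
rewrite (permP (perm_to_rem oQ)) /=.
by case: o.2; rewrite -?cats1 ?size_cat ?count_cat /= !add0n ?addn0 ?addn1 ?add1n
  ?addnS ?addSn.
Qed.

Lemma run_ind (P : seq op -> seq op -> Prop) :
  P [::] [::] ->
  (forall f Q o, wf_queue Q -> o \in Q -> (forall x, x \in Q -> prio o <= prio x) ->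
     wf_queue (next_queue Q o) -> (workload (next_queue Q o) <= f)%N ->
     P (next_queue Q o) (run f (next_queue Q o)) ->
     P Q (o :: run f (next_queue Q o))) ->
  forall f Q, wf_queue Q -> (workload Q <= f)%N -> P Q (run f Q).
Proof.
move=> P0 Pstep; elim=> [|f IH] [|q0 Q] // wfQ; rewrite run_cons; set Q1 := q0 :: Q.
have [oQ o_min] := pick_minP q0 Q1; set o := pick_min t p q0 Q1 in oQ o_min *.
have dupQ : q0 :: Q1 =i Q1 by move=> x; rewrite !inE orbA orbb.
rewrite dupQ in oQ; rewrite (workload_next_queue oQ) ltnS => load'.
apply: Pstep => //; last exact: IH (wf_next_queue wfQ oQ) load'.
  by move=> x; rewrite -dupQ; apply: o_min.
exact: wf_next_queue.
Qed.

Lemma mem_run f Q : wf_queue Q -> (workload Q <= f)%N ->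
  forall x, (x \in run f Q) = pending Q x.
Proof.
move: f Q; apply: (run_ind (P := fun Q s => forall x, (x \in s) = pending Q x)).
  by move=> x; rewrite /pending !in_nil andbF.
move=> f Q o wfQ oQ _ _ _ IH x /=.
rewrite inE IH pending_next_queue //.
by case: (eqVneq x o) => [->|] //=; rewrite /pending oQ.
Qed.

Lemma run_uniq f Q : wf_queue Q -> (workload Q <= f)%N -> uniq (run f Q).
Proof.
move: f Q; apply: (run_ind (P := fun _ s => uniq s)) => // f Q o wfQ oQ _ wf' load' IH.
by rewrite /= IH andbT (mem_run wf' load') pending_next_queue // eqxx.
Qed.

Lemma run_test_before_processing f Q : wf_queue Q -> (workload Q <= f)%N ->
  forall y, (y, true) \in Q ->
  (index (y, true) (run f Q) < index (y, false) (run f Q))%N.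
Proof.
move: f Q; apply: (run_ind (P := fun Q s => forall y, (y, true) \in Q ->
  (index (y, true) s < index (y, false) s)%N)) => //.
move=> f Q o /[dup] wfQ /andP [uQ /allP wfQ'] oQ _ _ _ IH y yQ /=.
case: (eqVneq o (y, true)) => [->|oy]; first by rewrite xpair_eqE andbF.
have -> /= : (o == (y, false)) = false.
  by apply/negP => /eqP o_eq; have := wfQ' _ oQ; rewrite o_eq /= yQ.
by rewrite ltnS IH // mem_next_queue // eq_sym oy yQ.
Qed.

Lemma run_greedy f Q : wf_queue Q -> (workload Q <= f)%N ->
  forall a b, (index a (run f Q) < index b (run f Q))%N ->
  (* [b] is already available when [a] is executed *)
  (b \in Q) || ~~ b.2 && (index (b.1, true) (run f Q) < index a (run f Q))%N ->
  prio a <= prio b.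
Proof.
move: f Q; apply: (run_ind (P := fun Q s => forall a b, (index a s < index b s)%N ->
  (b \in Q) || ~~ b.2 && (index (b.1, true) s < index a s)%N -> prio a <= prio b)).
  by [].
move=> f Q o /andP [uQ _] _ o_min _ _ IH a b /=.
case: (eqVneq o a) => [<- _|oa]; first by rewrite ltn0 andbF orbF; apply: o_min.
case: (eqVneq o b) => [<-|ob] //; rewrite ltnS => ab avail; apply: IH => //.
rewrite mem_next_queue //; case/orP: avail => [bQ|/andP [b2]].
  by rewrite eq_sym ob bQ.
case: (eqVneq o (b.1, true)) => [-> _|_]; last by rewrite ltnS b2 => ->; rewrite !orbT.
by case: b b2 {ab ob} => y [] //= _; rewrite eqxx orbT.
Qed.

Definition init_queue : seq op := [seq (j, true) | j <- enum 'I_n].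

Lemma mem_init_queue (o : op) : (o \in init_queue) = o.2.
Proof.
case: o => y b; apply/mapP/idP => [[j _ [_ ->]] //|/= b_true].
by exists y; rewrite ?mem_enum // b_true.
Qed.

Lemma wf_init_queue : wf_queue init_queue.
Proof.
rewrite /wf_queue map_inj_uniq ?enum_uniq => [|a b [] //].
by apply/allP => o; rewrite mem_init_queue => ->.
Qed.

Lemma workload_init_queue : (workload init_queue <= 2 * n)%N.
Proof.
rewrite /workload size_map count_map (eq_count (a2 := predT)) // count_predT.
by rewrite size_enum_ord mul2n -addnn.
Qed.

Local Notation sort1 := (sort1 t p).
Local Notation pos o := (index o sort1).

Lemma mem_sort1 (o : op) : o \in sort1.
Proof.
rewrite (mem_run wf_init_queue workload_init_queue) /pending !mem_init_queue.
by case: o.2.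
Qed.

Lemma sort1_uniq : uniq sort1.
Proof. exact: run_uniq wf_init_queue workload_init_queue. Qed.

Lemma pos_inj (a b : op) : pos a = pos b -> a = b.
Proof. by move=> ab; rewrite -(nth_index a (mem_sort1 a)) ab nth_index ?mem_sort1. Qed.

Lemma pos_test_lt_processing (y : 'I_n) : (pos (y, true) < pos (y, false))%N.
Proof.
by apply: run_test_before_processing wf_init_queue workload_init_queue _ _;
  rewrite mem_init_queue.
Qed.

Lemma sort1_greedy (a b : op) : (pos a < pos b)%N ->
  b.2 || (pos (b.1, true) < pos a)%N -> prio a <= prio b.
Proof.
move=> ab avail; apply: run_greedy wf_init_queue workload_init_queue _ _ ab _.
by rewrite mem_init_queue; case: b.2 avail.
Qed.

End Simulation.

Section Schedule.
Variables (R : realFieldType) (n : nat) (t p : 'I_n -> R).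
Hypotheses (t_ge0 : forall j, 0 <= t j) (p_ge0 : forall j, 0 <= p j).

Local Notation sort1 := (sort1 t p).
Local Notation pos o := (index o sort1).
Local Notation start := (start t p).

Lemma dur_ge0 (o : op n) : 0 <= dur t p o.
Proof. by rewrite /dur; case: o.2. Qed.

Lemma start_le (u v : nat) : (u <= v)%N -> start u <= start v.
Proof.
move/subnKC <-; rewrite /start takeD big_cat lerDl.
by apply: sumr_ge0 => o _; apply: dur_ge0.
Qed.

Lemma startS (d : op n) (u : nat) : (u < size sort1)%N ->
  start u.+1 = start u + dur t p (nth d sort1 u).
Proof. by move=> u_lt; rewrite /start (take_nth d u_lt) -cats1 big_cat big_seq1. Qed.

Lemma overlap_before_compl (j : 'I_n) (d : op n) (u : nat) : (u < size sort1)%N ->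
  Num.max 0 (Num.min (start u.+1) (compl t p j) - start u) =
  if (u <= pos (j, false))%N then dur t p (nth d sort1 u) else 0.
Proof.
move=> u_lt; rewrite /compl (startS d u_lt); case: leqP => [u_le|u_gt].
  rewrite min_l; last by rewrite -(startS d u_lt) start_le.
  by rewrite addrAC subrr add0r max_r ?dur_ge0.
by rewrite max_l // subr_le0 ge_min start_le ?orbT.
Qed.

Lemma dd_split (k j : 'I_n) : dd t p k j =
  (if (pos (k, true) <= pos (j, false))%N then t k else 0) +
  (if (pos (k, false) <= pos (j, false))%N then p k else 0).
Proof.
pose before (o : op n) := if (pos o <= pos (j, false))%N then dur t p o else 0.
transitivity (\sum_(o <- sort1 | o.1 == k) before o).
  rewrite [RHS](big_nth (k, true)) big_mkord; apply: eq_bigr => u _.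
  by rewrite /before index_uniq ?sort1_uniq // -overlap_before_compl.
have k_ops : perm_eq [seq o <- sort1 | o.1 == k] [:: (k, true); (k, false)].
  apply: uniq_perm; rewrite ?filter_uniq ?sort1_uniq //= ?inE ?xpair_eqE ?andbF //.
  move=> [y b]; rewrite mem_filter mem_sort1 andbT !inE !xpair_eqE.
  by case: b; rewrite ?andbT ?andbF ?orbF.
by rewrite -big_filter (perm_big _ k_ops) !big_cons big_nil /= addr0.
Qed.

End Schedule.

Section FirstFinisher.
Variables (R : realFieldType) (n : nat) (t p : 'I_n -> R).
Hypotheses (t_ge0 : forall j, 0 <= t j) (p_ge0 : forall j, 0 <= p j).
Variables (f s : 'I_n).
Local Notation pos o := (index o (sort1 t p)).
Local Notation greedy a b := (@sort1_greedy R n t p a b).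
Hypothesis f_first : (pos (f, false) < pos (s, false))%N.

Lemma DD_first_finisher :
  DD t p f s = sigma t p f + (if (pos (s, true) < pos (f, false))%N then t s else 0).
Proof.
have Tf_le : (pos (f, true) <= pos (s, false))%N.
  exact: ltnW (ltn_trans (pos_test_lt_processing t p f) f_first).
have Ts_ne : pos (s, true) != pos (f, false) by apply/eqP => /pos_inj.
rewrite /DD !dd_split // Tf_le (ltnW f_first) [(pos (s, false) <= _)%N]leqNgt f_first.
by rewrite [(pos (s, true) <= _)%N]leq_eqVlt (negbTE Ts_ne) !addr0.
Qed.

Lemma mm_le_late_test : (pos (f, false) < pos (s, true))%N -> mm t p f <= t s.
Proof.
move=> Pf_lt; have Tf_lt := ltn_trans (pos_test_lt_processing t p f) Pf_lt.
rewrite ge_max; apply/andP; split.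
  exact: (greedy (f, true) (s, true) Tf_lt isT).
exact: (greedy (f, false) (s, true) Pf_lt isT).
Qed.

Lemma mm_le_processing_early_test : (pos (s, true) < pos (f, false))%N ->
  mm t p f <= p s /\ t s <= p s.
Proof.
move=> Ts_lt; have pf_le : p f <= p s := greedy (f, false) (s, false) f_first Ts_lt.
have Tf_lt := ltn_trans (pos_test_lt_processing t p f) f_first.
rewrite ge_max pf_le andbT.
case: (ltngtP (pos (s, true)) (pos (f, true))) => [Ts_Tf|Tf_Ts|/pos_inj [sf]].
- have ts_le : t s <= t f := greedy (s, true) (f, true) Ts_Tf isT.
  have tf_le : t f <= p s := greedy (f, true) (s, false) Tf_lt Ts_Tf.
  by rewrite tf_le (le_trans ts_le).
- have tf_le : t f <= t s := greedy (f, true) (s, true) Tf_Ts isT.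
  have ts_le : t s <= p f := greedy (s, true) (f, false) Ts_lt Tf_Ts.
  by rewrite !(le_trans _ pf_le) ?(le_trans tf_le).
- by move: f_first; rewrite sf ltnn.
Qed.
End FirstFinisher.

Section Stretch.
Variables (R : realFieldType) (mu nu : R).
Hypothesis munu_gt1 : 1 < mu * nu.

Lemma le_stretch (D M : R) : mu * nu * (D - M) <= M -> D <= (1 + (mu * nu)^-1) * M.
Proof.
move=> excess; have munu_gt0 : 0 < mu * nu := lt_trans ltr01 munu_gt1.
have : D - M <= (mu * nu)^-1 * M by rewrite ler_pdivlMl.
lra.
Qed.

Variables (n : nat) (t p : 'I_n -> R).
Hypotheses (t_ge0 : forall j, 0 <= t j) (p_ge0 : forall j, 0 <= p j).
Hypotheses (mu_gt1 : 1 < mu) (nu_gt0 : 0 < nu) (nu_lt1 : nu < 1).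

Lemma sigma_ge0 (j : 'I_n) : 0 <= sigma t p j.
Proof. by rewrite addr_ge0. Qed.

Lemma mm_le_sigma (j : 'I_n) : mm t p j <= sigma t p j.
Proof. by rewrite /mm /sigma ge_max lerDl lerDr t_ge0 p_ge0. Qed.

Lemma imbalanced_sigma (j : 'I_n) : imbalanced t p mu j ->
  mu * sigma t p j <= (1 + mu) * mm t p j.
Proof. by rewrite /imbalanced /sigma /mm -addr_min_max => imb; lra. Qed.

Variables (f s : 'I_n).
Hypotheses (imb_f : imbalanced t p mu f) (imb_s : imbalanced t p mu s).
Hypothesis mm_s_le : nu * mm t p s <= mm t p f.

Lemma sigma_le_stretch_late : mm t p f <= t s ->
  sigma t p f <= (1 + (mu * nu)^-1) * Dstar t p f s.
Proof.
move=> mm_le; apply: le_stretch; rewrite /Dstar.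
have [fs|sf] := leP (sigma t p f) (sigma t p s).
  by rewrite subrr mulr0 sigma_ge0.
have mu_gt0 : 0 < mu := lt_trans ltr01 mu_gt1.
have sigma_f_le : mu * sigma t p f <= (1 + mu) * t s.
  apply: le_trans (imbalanced_sigma imb_f) _.
  by rewrite ler_pM2l // ltr_wpDr ?ltW.
have mu_ps_ge0 : 0 <= mu * p s := mulr_ge0 (ltW mu_gt0) (p_ge0 s).
have nu_ts_le : nu * t s <= t s := ler_piMl (t_ge0 s) (ltW nu_lt1).
rewrite /sigma in sigma_f_le *.
have : nu * (mu * (t f + p f - (t s + p s))) <= nu * t s by rewrite ler_pM2l //; lra.
have := p_ge0 s; lra.
Qed.

Lemma sigma_add_le_stretch_early : mm t p f <= p s -> t s <= p s ->
  sigma t p f + t s <= (1 + (mu * nu)^-1) * Dstar t p f s.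
Proof.
move=> mm_f_le ts_le; apply: le_stretch; rewrite /Dstar.
have mu_gt0 : 0 < mu := lt_trans ltr01 mu_gt1.
have [fs|sf] := leP (sigma t p f) (sigma t p s).
  have mu_ts_le : mu * t s <= p s.
    by move: imb_s; rewrite /imbalanced /mm min_l // max_r.
  have mm_f_ge := mm_le_sigma f.
  have : nu * (mu * t s) <= nu * p s by rewrite ler_pM2l.
  have mm_s : mm t p s = p s by rewrite /mm max_r.
  by move: mm_s_le; rewrite mm_s; lra.
have excess_le : sigma t p f + t s - sigma t p s <= Num.min (t f) (p f).
  by move: mm_f_le; rewrite /sigma /mm -(addr_min_max (t f)); lra.
apply: le_trans (_ : mu * nu * Num.min (t f) (p f) <= _).
  by rewrite ler_pM2l // mulr_gt0.
have mu_min_le : mu * Num.min (t f) (p f) <= p s := le_trans imb_f mm_f_le.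
have : nu * (mu * Num.min (t f) (p f)) <= nu * p s by rewrite ler_pM2l.
have nu_ps_le : nu * p s <= p s := ler_piMl (p_ge0 s) (ltW nu_lt1).
rewrite /sigma; have := t_ge0 s; lra.
Qed.

Lemma DD_le_stretch : (index (f, false) (sort1 t p) < index (s, false) (sort1 t p))%N ->
  DD t p f s <= (1 + (mu * nu)^-1) * Dstar t p f s.
Proof.
move=> f_first; rewrite DD_first_finisher //.
case: ltnP => [early|late].
  have [mm_f_le ts_le] := mm_le_processing_early_test f_first early.
  exact: sigma_add_le_stretch_early.
have {}late : (index (f, false) (sort1 t p) < index (s, true) (sort1 t p))%N.
  by rewrite ltn_neqAle late andbT; apply/eqP => /pos_inj.
by rewrite addr0 sigma_le_stretch_late // mm_le_late_test.
Qed.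

End Stretch.

Theorem mainTheorem8 (R : realFieldType) (n : nat) (t p : 'I_n -> R) (mu nu : R)
  (hmu : 1 < mu) (hnu0 : 0 < nu) (hnu1 : nu < 1) (hmunu : 1 < mu * nu)
  (hmunu2 : 1 + mu^-1 <= nu + nu ^+ 2)
  (ht : forall j, 0 <= t j) (hp : forall j, 0 <= p j)
  (hgp : general_position t p)
  (i j k : 'I_n) (hij : i != j) (hik : i != k) (hjk : j != k)
  (hredi : red_pair t p mu nu i k) (hredj : red_pair t p mu nu j k) :
  t k <= Dstar t p i j /\
  DD t p i j <= (1 + (mu * nu)^-1) * Dstar t p i j.
Proof.
case: hredi => _ imb_i nu_mm_i tk_le_i _; case: hredj => _ imb_j nu_mm_j tk_le_j _.
split.
  by rewrite /Dstar le_min !(le_trans _ (mm_le_sigma ht hp _)).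
have bound := DD_le_stretch hmunu ht hp hmu hnu0 hnu1.
case: (ltngtP (index (i, false) (sort1 t p)) (index (j, false) (sort1 t p)))
  => [i_first|j_first|/pos_inj [ij]].
- by apply: bound => //; apply: le_trans tk_le_i.
- rewrite /DD addrC /Dstar minC; apply: bound => //; exact: le_trans tk_le_j.
- by rewrite ij eqxx in hij.
Qed.
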